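(* For any finite-dimensional complex Lie algebra $\mathfrak{h}$, $\mathcal{F}(\mathcal{C}^\bullet\mathfrak{h},\mathfrak{sl}_2)_{(0)}=\mathcal{F}^1(\mathcal{C}^\bullet\mathfrak{h},\mathfrak{sl}_2)_{(0)}$.
   Context: $\mathcal{C}^\bullet\mathfrak{h}=(\bigwedge^\bullet\mathfrak{h}^*,d)$ is the Chevalley–Eilenberg cochain cdga of $\mathfrak{h}$. For a cdga $A$ and finite-dimensional Lie algebra $\mathfrak{g}$, $\mathcal{F}(A,\mathfrak{g})=\{\omega\in A^1\otimes\mathfrak{g}: d\omega+\frac12[\omega,\omega]=0\}$ (for $\omega=\sum_k\eta_k\otimes g_k$: $\sum_k d\eta_k\otimes g_k+\sum_{k<l}\eta_k\eta_l\otimes[g_k,g_l]=0$), and $\mathcal{F}^1(A,\mathfrak{g})=\{\eta\otimes g:\eta\in A^1,\ d\eta=0,\ g\in\mathfrak{g}\}$. Equivalently, identifying $\mathfrak{h}^*\otimes\mathfrak{sl}_2=\mathrm{Hom}(\mathfrak{h},\mathfrak{sl}_2)$, $\mathcal{F}(\mathcal{C}^\bullet\mathfrak{h},\mathfrak{sl}_2)$ is the variety of Lie algebra homomorphisms $\mathfrak{h}\to\mathfrak{sl}_2$ and $\mathcal{F}^1$ the subset of those of rank at most $1$. $X_{(0)}$ denotes the analytic germ at $0$. *)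

(* Complex numbers are modelled as R[i] = complex R for an
   arbitrary R : realType (every realType is isomorphic to the reals). *)
From HB Require Import structures.
From mathcomp Require Import all_boot all_order all_algebra.
From mathcomp Require Import complex.
From mathcomp Require Import reals.
Set Implicit Arguments. Unset Strict Implicit. Unset Printing Implicit Defensive.
Import Order.TTheory GRing.Theory Num.Theory.
Local Open Scope ring_scope.

(* A finite-dimensional Lie algebra h over a ring C, of dimension n, given by
   its structure constants in a basis e_0..e_{n-1}:
     [e_i, e_j] = \sum_k c i j k e_k. *)
Definition is_lie_structure (C : comNzRingType) (n : nat)
    (c : 'I_n -> 'I_n -> 'I_n -> C) : Prop :=
  (forall i k, c i i k = 0) /\
  (forall i j k, c i j k = - c j i k) /\
  (* Jacobi: [[e_i,e_j],e_l] + [[e_j,e_l],e_i] + [[e_l,e_i],e_j] = 0 *)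
  (forall i j l m,
     \sum_(k < n) (c i j k * c k l m + c j l k * c k i m + c l i k * c k j m)
       = 0).

Definition in_sl2 (C : comNzRingType) (g : 'M[C]_2) : Prop := \tr g = 0.

Definition mx_bracket (C : comNzRingType) (X Y : 'M[C]_2) : 'M[C]_2 :=
  X *m Y - Y *m X.

(* A linear map phi : h -> sl_2 is encoded by A i = phi (e_i).
   F(C^. h, sl_2) = variety of Lie algebra homomorphisms h -> sl_2. *)
Definition in_F (C : comNzRingType) (n : nat) (c : 'I_n -> 'I_n -> 'I_n -> C)
    (A : 'I_n -> 'M[C]_2) : Prop :=
  (forall i, in_sl2 (A i)) /\
  (forall i j, mx_bracket (A i) (A j) = \sum_(k < n) c i j k *: A k).

(* F^1(C^. h, sl_2) = { eta (x) g : eta in h^*, d eta = 0, g in sl_2 }.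
   d eta = 0 in the Chevalley-Eilenberg complex means eta vanishes on all
   brackets: eta([e_i,e_j]) = \sum_k c i j k eta_k = 0. *)
Definition in_F1 (C : comNzRingType) (n : nat) (c : 'I_n -> 'I_n -> 'I_n -> C)
    (A : 'I_n -> 'M[C]_2) : Prop :=
  exists (eta : 'I_n -> C) (g : 'M[C]_2),
    [/\ in_sl2 g,
        (forall i j, \sum_(k < n) c i j k * eta k = 0) &
        (forall i, A i = eta i *: g)].

(* Equality of set germs at 0 in Hom(h, gl_2) = C^(4n): the two sets agree on
   some polydisc neighbourhood of 0. *)
Definition germ_eq0 (R : rcfType) (n : nat) (P Q : ('I_n -> 'M[R[i]]_2) -> Prop)
  : Prop :=
  exists2 e : R[i], 0 < e &
    forall A : 'I_n -> 'M[R[i]]_2,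
      (forall k a b, `|A k a b| < e) -> (P A <-> Q A).

From HB Require Import structures.
From mathcomp Require Import all_boot all_order all_algebra.
From mathcomp Require Import ring.
From mathcomp Require Import complex.
From mathcomp Require Import reals.
Import Order.TTheory GRing.Theory Num.Theory.
Local Open Scope ring_scope.
Set Implicit Arguments. Unset Strict Implicit.

(* If some X = A (e_i + e_j) has [qform X != 0], the nonzero eigenvalues of ad X on
   sl_2 are +-2 sqrt (qform X), hence small when A is small.  An eigenvector of ad X
   built from [X, A e_k] lies in the image of A and pulls back to an eigenvector of
   ad (e_i + e_j) on h with the same eigenvalue; as the nonzero eigenvalues of these
   finitely many operators are bounded away from 0, ad X must kill the image of A,
   which then lies on the line of X.  Otherwise [qform] vanishes on every A (e_i + e_j),
   so the image of A is totally isotropic for the nondegenerate form [qform] on sl_2,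
   hence again at most a line. *)

Lemma ord2P (k : 'I_2) : k = 0 \/ k = 1.
Proof. by case: k => [[|[|//]]] ?; [left|right]; apply: val_inj. Qed.

Lemma sum_ord2 (V : nmodType) (F : 'I_2 -> V) : \sum_(i < 2) F i = F 0 + F 1.
Proof.
rewrite !big_ord_recl big_ord0 addr0.
by congr (F _ + F _); apply: val_inj.
Qed.

Section TwoByTwo.
Variable C : comNzRingType.
Implicit Types X Y Z : 'M[C]_2.

Lemma mx2P X Y : X 0 0 = Y 0 0 -> X 0 1 = Y 0 1 ->
  X 1 0 = Y 1 0 -> X 1 1 = Y 1 1 -> X = Y.
Proof.
move=> e00 e01 e10 e11; apply/matrixP => i j.
by case: (ord2P i) => ->; case: (ord2P j) => ->.
Qed.

Lemma mulmx2E X Y a b : (X *m Y) a b = X a 0 * Y 0 b + X a 1 * Y 1 b.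
Proof. by rewrite mxE sum_ord2. Qed.

Lemma mxtrace2E X : \tr X = X 0 0 + X 1 1.
Proof. by rewrite /mxtrace sum_ord2. Qed.

Lemma in_sl2E X : in_sl2 X -> X 1 1 = - X 0 0.
Proof. by rewrite /in_sl2 mxtrace2E => /eqP; rewrite addrC addr_eq0 => /eqP. Qed.

Lemma in_sl2D X Y : in_sl2 X -> in_sl2 Y -> in_sl2 (X + Y).
Proof. by rewrite /in_sl2 mxtraceD => -> ->; rewrite addr0. Qed.

(* On traceless matrices [qform X = - det X]; [8 * qform] is the Killing form. *)
Definition qform X := X 0 0 ^+ 2 + X 0 1 * X 1 0.

Definition qbil X Y := 2 * X 0 0 * Y 0 0 + X 0 1 * Y 1 0 + X 1 0 * Y 0 1.

Lemma qformD X Y : qform (X + Y) = qform X + qform Y + qbil X Y.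
Proof. by rewrite /qform /qbil !mxE; ring. Qed.

Lemma qform_double X : qform (X + X) = 4 * qform X.
Proof. by rewrite /qform !mxE; ring. Qed.

Lemma mx_bracketDl X Y Z : mx_bracket (X + Y) Z = mx_bracket X Z + mx_bracket Y Z.
Proof. by rewrite /mx_bracket mulmxDl mulmxDr opprD addrACA. Qed.

Lemma mx_bracketDr X Y Z : mx_bracket X (Y + Z) = mx_bracket X Y + mx_bracket X Z.
Proof. by rewrite /mx_bracket mulmxDl mulmxDr opprD addrACA. Qed.

Lemma mx_bracketZr a X Y : mx_bracket X (a *: Y) = a *: mx_bracket X Y.
Proof. by rewrite /mx_bracket scalerBr scalemxAr scalemxAl. Qed.

Lemma mx_bracket_sumr n X (a : 'I_n -> C) (Y : 'I_n -> 'M[C]_2) :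
  mx_bracket X (\sum_(l < n) a l *: Y l) = \sum_(l < n) a l *: mx_bracket X (Y l).
Proof.
rewrite /mx_bracket mulmx_sumr mulmx_suml -sumrB; apply: eq_bigr => l _.
by rewrite scalerBr scalemxAr scalemxAl.
Qed.

Lemma mx_bracket_scale a b X : mx_bracket (a *: X) (b *: X) = 0.
Proof. by rewrite /mx_bracket -!scalemxAl -!scalemxAr !scalerA mulrC subrr. Qed.

Lemma mx_bracket_ad3 X A : in_sl2 X ->
  mx_bracket X (mx_bracket X (mx_bracket X A)) = (4 * qform X) *: mx_bracket X A.
Proof.
move=> /in_sl2E hX; rewrite /qform /mx_bracket.
by apply: mx2P; rewrite !(mulmx2E, mxE) hX; ring.
Qed.

Lemma mx_bracket_ad_eigvec X A nu : in_sl2 X -> nu ^+ 2 = 4 * qform X ->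
  let W := mx_bracket X A in
  mx_bracket X (mx_bracket X W + nu *: W) = nu *: (mx_bracket X W + nu *: W).
Proof.
move=> hX hnu W; rewrite mx_bracketDr mx_bracketZr mx_bracket_ad3 // -hnu.
by rewrite [RHS]scalerDr scalerA -expr2 addrC.
Qed.

End TwoByTwo.

Section Proportional.
Variable F : fieldType.
Implicit Types g A X : 'M[F]_2.

Definition minors2_eq0 g A :=
  [/\ g 0 0 * A 0 1 = g 0 1 * A 0 0, g 0 0 * A 1 0 = g 1 0 * A 0 0
    & g 0 1 * A 1 0 = g 1 0 * A 0 1].

Lemma minors2_eq0_entries g A : in_sl2 g -> in_sl2 A -> minors2_eq0 g A ->
  forall a b a' b', g a b * A a' b' = g a' b' * A a b.
Proof.
move=> /in_sl2E hg /in_sl2E hA [m1 m2 m3] a b a' b'.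
by case: (ord2P a) => ->; case: (ord2P b) => ->; case: (ord2P a') => ->;
  case: (ord2P b') => ->; rewrite ?hg ?hA;
  first [ring | ring: m1 | ring: m2 | ring: m3].
Qed.

Lemma scale_of_minors m n (g A : 'M[F]_(m, n)) a b : g a b != 0 ->
  (forall a' b', g a b * A a' b' = g a' b' * A a b) -> A = (A a b / g a b) *: g.
Proof.
move=> gab hm; apply/matrixP => a' b'; rewrite mxE; apply: (mulfI gab).
by rewrite hm; field.
Qed.

Lemma mx_neq0_entry m n (g : 'M[F]_(m, n)) : g != 0 -> exists a b, g a b != 0.
Proof.
move=> gnz; case: (pickP (fun ab : 'I_m * 'I_n => g ab.1 ab.2 != 0)) => [[a b] /= gab|g0].
  by exists a, b.
by case/eqP: gnz; apply/matrixP => a b; rewrite mxE; apply/eqP/negbFE/(g0 (a, b)).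
Qed.

Lemma in_F1_of_minors n (c : 'I_n -> 'I_n -> 'I_n -> F) (A : 'I_n -> 'M[F]_2) g :
  in_F c A -> in_sl2 g -> g != 0 -> (forall k, minors2_eq0 g (A k)) -> in_F1 c A.
Proof.
move=> [hsl hb] hg gnz hm; have [a [b gab]] := mx_neq0_entry gnz.
pose eta k := A k a b / g a b.
have hA k : A k = eta k *: g.
  exact: scale_of_minors gab (minors2_eq0_entries hg (hsl k) (hm k) a b).
exists eta, g; split=> // i j; move: (hb i j).
rewrite !hA mx_bracket_scale; under eq_bigr do rewrite hA scalerA.
by rewrite -scaler_suml => /esym/eqP; rewrite scalemx_eq0 (negbTE gnz) orbF => /eqP.
Qed.

Lemma in_F1_in_F n (c : 'I_n -> 'I_n -> 'I_n -> F) (A : 'I_n -> 'M[F]_2) :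
  in_F1 c A -> in_F c A.
Proof.
case=> eta [g] [hg hc hA]; split=> [i|i j]; first by rewrite /in_sl2 hA mxtraceZ hg mulr0.
rewrite !hA mx_bracket_scale; under eq_bigr do rewrite hA scalerA.
by rewrite -scaler_suml hc scale0r.
Qed.

Lemma isotropic_minors g A : qform g = 0 -> qform A = 0 -> qbil g A = 0 ->
  minors2_eq0 g A.
Proof.
rewrite /qform /qbil => qg qA b.
set x := g 0 0 in qg b *; set y := g 0 1 in qg b *; set z := g 1 0 in qg b *.
set p := A 0 0 in qA b *; set q := A 0 1 in qA b *; set r := A 1 0 in qA b *.
split; apply/eqP; rewrite -subr_eq0 -sqrf_eq0; apply/eqP.
- have -> : (x * q - y * p) ^+ 2 = - y * q * (2 * x * p + y * r + z * q)
      + q ^+ 2 * (x ^+ 2 + y * z) + y ^+ 2 * (p ^+ 2 + q * r) by ring.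
  by rewrite b qg qA; ring.
- have -> : (x * r - z * p) ^+ 2 = - z * r * (2 * x * p + y * r + z * q)
      + r ^+ 2 * (x ^+ 2 + y * z) + z ^+ 2 * (p ^+ 2 + q * r) by ring.
  by rewrite b qg qA; ring.
- have -> : (y * r - z * q) ^+ 2 =
      (2 * x * p + y * r + z * q) * (y * r + z * q - 2 * x * p)
      + 4 * x ^+ 2 * (p ^+ 2 + q * r) + 4 * p ^+ 2 * (x ^+ 2 + y * z)
      - 4 * (x ^+ 2 + y * z) * (p ^+ 2 + q * r) by ring.
  by rewrite b qg qA; ring.
Qed.

Hypothesis two_neq0 : (2 : F) != 0.

Lemma commute_minors X A : in_sl2 X -> in_sl2 A -> mx_bracket X A = 0 ->
  minors2_eq0 X A.
Proof.
move=> /in_sl2E hX /in_sl2E hA /matrixP e.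
move: (e 0 0) (e 0 1) (e 1 0); rewrite /mx_bracket !(mulmx2E, mxE) hX hA.
move=> e00 e01 e10; split; apply/eqP; rewrite -subr_eq0.
- by rewrite -(mulrI_eq0 _ (lregP two_neq0)) -e01; apply/eqP; ring.
- by rewrite -(mulrI_eq0 _ (lregP two_neq0)) -oppr_eq0 -e10; apply/eqP; ring.
- by rewrite -e00; apply/eqP; ring.
Qed.

Lemma in_F1_of_centralizer n (c : 'I_n -> 'I_n -> 'I_n -> F) (A : 'I_n -> 'M[F]_2) X :
  in_F c A -> in_sl2 X -> X != 0 -> (forall k, mx_bracket X (A k) = 0) ->
  in_F1 c A.
Proof.
move=> hF hX Xnz hXA; apply: (in_F1_of_minors hF hX Xnz) => k.
exact: commute_minors hX (hF.1 k) (hXA k).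
Qed.

Lemma in_F1_of_isotropic n (c : 'I_n -> 'I_n -> 'I_n -> F) (A : 'I_n -> 'M[F]_2) :
  in_F c A -> (forall i j, qform (A i + A j) = 0) -> in_F1 c A.
Proof.
move=> hF hq.
have qA k : qform (A k) = 0.
  move: (hq k k); rewrite qform_double (_ : 4 = 2 * 2); last by ring.
  by move/eqP; rewrite !mulf_eq0 (negbTE two_neq0) => /eqP.
have qb i j : qbil (A i) (A j) = 0 by move: (hq i j); rewrite qformD !qA !add0r.
case: (pickP (fun k => A k != 0)) => [k0 /= Ak0|A0].
  by apply: (in_F1_of_minors hF (hF.1 k0) Ak0) => k; apply: isotropic_minors.
exists (fun=> 0), 0; split=> [|i j|k]; first by rewrite /in_sl2 mxtrace0.
  by rewrite big1 // => k _; rewrite mulr0.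
by rewrite scale0r; apply/eqP/negbFE/A0.
Qed.

End Proportional.

Lemma intertwining_eigen_root (C : idomainType) n (M : 'M[C]_n)
    (phi : 'rV[C]_n -> 'M[C]_2) X y nu :
  {morph phi : v w / v + w} -> (forall a, {morph phi : v / a *: v}) ->
  (forall v, phi (v *m M) = mx_bracket X (phi v)) ->
  mx_bracket X (phi y) = nu *: phi y -> phi y != 0 -> root (char_poly M) nu.
Proof.
move=> phiD phiZ phiM hy; have phi0 : phi 0 = 0.
  by rewrite -(scale0r (0 : 'rV[C]_n)) phiZ scale0r.
case: n M phi y phiD phiZ phiM hy phi0 => [|n] M phi y phiD phiZ phiM hy phi0 ynz.
  by move: ynz; rewrite thinmx0 phi0 eqxx.
have phi_horner p : phi (y *m horner_mx M p) = p.[nu] *: phi y.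
  elim/poly_ind: p => [|p a IH]; first by rewrite rmorph0 mulmx0 phi0 horner0 scale0r.
  rewrite rmorphD rmorphM /= horner_mx_X horner_mx_C mulmxDr mulmxA phiD phiM IH.
  by rewrite mul_mx_scalar phiZ mx_bracketZr hy hornerMXaddC scalerA scalerDl.
move: (phi_horner (char_poly M)); rewrite Cayley_Hamilton mulmx0 phi0.
by move/esym/eqP; rewrite scalemx_eq0 (negbTE ynz) orbF.
Qed.

Section Intertwining.
Variables (C : idomainType) (n : nat) (c : 'I_n -> 'I_n -> 'I_n -> C).
Variable A : 'I_n -> 'M[C]_2.

Definition hom_of (v : 'rV[C]_n) : 'M[C]_2 := \sum_(l < n) v 0 l *: A l.

(* The matrix of ad (e_i + e_j) acting on coordinate row vectors. *)
Definition ad_pair_mx (i j : 'I_n) : 'M[C]_n := \matrix_(l, m) (c i l m + c j l m).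

Lemma hom_ofD : {morph hom_of : v w / v + w}.
Proof.
by move=> v w; rewrite /hom_of -big_split; apply: eq_bigr => l _; rewrite mxE scalerDl.
Qed.

Lemma hom_ofZ a : {morph hom_of : v / a *: v}.
Proof. by move=> v; rewrite /hom_of scaler_sumr; apply: eq_bigr => l _; rewrite mxE scalerA. Qed.

Lemma hom_of_delta k : hom_of (delta_mx 0 k) = A k.
Proof.
rewrite /hom_of (bigD1 k) //= big1 ?addr0; first by rewrite mxE !eqxx scale1r.
by move=> l /negbTE kl; rewrite mxE eqxx kl scale0r.
Qed.

Hypothesis hom_A : in_F c A.

Lemma hom_of_ad_pair i j v :
  hom_of (v *m ad_pair_mx i j) = mx_bracket (A i + A j) (hom_of v).
Proof.
rewrite /hom_of mx_bracket_sumr.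
under [RHS]eq_bigr do rewrite mx_bracketDl !hom_A.2 -big_split scaler_sumr.
rewrite exchange_big /=; apply: eq_bigr => m _.
rewrite !mxE scaler_suml; apply: eq_bigr => l _.
by rewrite mxE -scalerDl scalerA mulrDr.
Qed.

End Intertwining.

Lemma ad_pair_root_of_noncommuting (C : numClosedFieldType) n
    (c : 'I_n -> 'I_n -> 'I_n -> C) (A : 'I_n -> 'M[C]_2) i j k :
  in_F c A -> qform (A i + A j) != 0 -> mx_bracket (A i + A j) (A k) != 0 ->
  exists2 nu, nu != 0 &
    nu ^+ 2 = 4 * qform (A i + A j) /\ root (char_poly (ad_pair_mx c i j)) nu.
Proof.
move=> hF; set X := A i + A j; set W := mx_bracket X (A k) => qX0 W0.
have hX : in_sl2 X by apply: in_sl2D; apply: hF.1.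
pose mu := 2 * sqrtC (qform X).
have mu2 : mu ^+ 2 = 4 * qform X by rewrite exprMn sqrtCK; congr (_ * _); ring.
have mu0 : mu != 0 by rewrite mulf_neq0 ?pnatr_eq0 // sqrtC_eq0.
have root_of nu : nu ^+ 2 = 4 * qform X -> mx_bracket X W + nu *: W != 0 ->
    root (char_poly (ad_pair_mx c i j)) nu.
  move=> hnu Y0; pose e : 'rV[C]_n := delta_mx 0 k *m ad_pair_mx c i j.
  have hy : hom_of A (e *m ad_pair_mx c i j + nu *: e) = mx_bracket X W + nu *: W.
    by rewrite hom_ofD hom_ofZ !hom_of_ad_pair // hom_of_delta.
  apply: (intertwining_eigen_root (y := e *m ad_pair_mx c i j + nu *: e)
    (hom_ofD A) (hom_ofZ A) (hom_of_ad_pair hF i j));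
    by rewrite hy //; apply: mx_bracket_ad_eigvec.
have [Ymu0|Ymu_nz] := eqVneq (mx_bracket X W + mu *: W) 0; last first.
  by exists mu => //; split=> //; apply: root_of.
have mu2N : (- mu) ^+ 2 = 4 * qform X by rewrite sqrrN.
exists (- mu); rewrite ?oppr_eq0 //; split=> //; apply: root_of => //.
apply: contra_neq W0 => YNmu0.
have : (mu + mu) *: W = (mx_bracket X W + mu *: W) - (mx_bracket X W + (- mu) *: W).
  by rewrite scaleNr opprD opprK addrACA subrr add0r scalerDl.
rewrite Ymu0 YNmu0 subrr => /eqP.
by rewrite scalemx_eq0 -mulr2n mulrn_eq0 (negbTE mu0) => /eqP.
Qed.

Lemma norm_qform_lt (C : numDomainType) (X : 'M[C]_2) t :
  (forall a b, `|X a b| < t) -> `|4 * qform X| < 8 * t ^+ 2.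
Proof.
move=> hX; have t0 : 0 < t by apply: le_lt_trans (hX 0 0).
have h00 : `|X 0 0 ^+ 2| < t ^+ 2 by rewrite normrX expr2 [t ^+ 2]expr2 ltr_pM.
have h01 : `|X 0 1 * X 1 0| < t ^+ 2 by rewrite normrM expr2 ltr_pM.
rewrite normrM ger0_norm ?ler0n // (_ : 8 * t ^+ 2 = 4 * (t ^+ 2 + t ^+ 2)); last by ring.
by rewrite ltr_pM2l ?ltr0n // (le_lt_trans (ler_normD _ _)) ?ltrD.
Qed.

Lemma norm_seq_lbound (C : numDomainType) (s : seq C) :
  exists2 d : C, 0 < d & forall z, z \in s -> z != 0 -> d <= `|z|.
Proof.
elim: s => [|z s [d d0 hd]]; first by exists 1.
have [->|z0] := eqVneq z 0.
  by exists d => // w; rewrite in_cons => /predU1P [->|/hd//]; rewrite eqxx.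
have cmp : (d >=< `|z|)%O.
  by apply: real_comparable; [exact: gtr0_real | exact: normr_real].
exists (Order.min d `|z|); first by rewrite comparable_lt_min // d0 normr_gt0.
move=> w; rewrite in_cons comparable_ge_min // => /predU1P [->|/hd hw /hw ->//] _.
by rewrite lexx orbT.
Qed.

Lemma ad_pair_roots_lbound (C : numClosedFieldType) n (c : 'I_n -> 'I_n -> 'I_n -> C) :
  exists2 d : C, 0 < d & forall i j nu,
    root (char_poly (ad_pair_mx c i j)) nu -> nu != 0 -> d <= `|nu|.
Proof.
pose roots (ij : 'I_n * 'I_n) :=
  sval (closed_field_poly_normal (char_poly (ad_pair_mx c ij.1 ij.2))).
have [d d0 hd] := norm_seq_lbound (flatten [seq roots ij | ij <- enum {: 'I_n * 'I_n}]).
exists d => // i j nu nu_root; apply: hd; apply/flatten_mapP; exists (i, j).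
  by rewrite mem_enum.
rewrite /roots; case: closed_field_poly_normal => rs /= hp.
by move: nu_root; rewrite {1}hp (monicP (char_poly_monic _)) scale1r root_prod_XsubC.
Qed.

Lemma small_in_F_in_F1 (C : numClosedFieldType) n (c : 'I_n -> 'I_n -> 'I_n -> C) :
  exists2 e : C, 0 < e &
    forall A : 'I_n -> 'M[C]_2,
      (forall k a b, `|A k a b| < e) -> in_F c A -> in_F1 c A.
Proof.
have [d d0 hd] := ad_pair_roots_lbound c.
exists (d / 8); first by rewrite divr_gt0 ?ltr0n.
move=> A hA hF.
have two_neq0 : (2 : C) != 0 by rewrite pnatr_eq0.
have commute i j k : qform (A i + A j) != 0 -> mx_bracket (A i + A j) (A k) = 0.
  move=> qX0; have [//|W0] := eqVneq (mx_bracket (A i + A j) (A k)) 0; exfalso.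
  have [nu nu0 [hnu nu_root]] := ad_pair_root_of_noncommuting hF qX0 W0.
  have d_nu := hd _ _ _ nu_root nu0.
  have small : `|nu ^+ 2| < 8 * (d / 4) ^+ 2.
    rewrite hnu; apply: norm_qform_lt => a b; rewrite mxE.
    rewrite (_ : d / 4 = d / 8 + d / 8); last by field.
    exact: le_lt_trans (ler_normD _ _) (ltrD (hA _ _ _) (hA _ _ _)).
  have large : d * d <= `|nu ^+ 2|.
    by rewrite normrX expr2; apply: ler_pM => //; apply: ltW.
  move: (le_lt_trans large small); rewrite (_ : 8 * (d / 4) ^+ 2 = d * d / 2); last by field.
  by rewrite ltr_pMr ?mulr_gt0 // invf_gt1 ?ltr0n // ltrn1.
case: (pickP (fun ij : 'I_n * 'I_n => qform (A ij.1 + A ij.2) != 0)) => [[i j] /= qX0|qX].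
  apply: (in_F1_of_centralizer two_neq0 hF (in_sl2D (hF.1 i) (hF.1 j))) => [|k].
    by apply: contraNneq qX0 => ->; rewrite /qform !mxE mulr0 expr0n addr0.
  exact: commute.
apply: (in_F1_of_isotropic two_neq0 hF) => i j.
by apply/eqP/negbFE/(qX (i, j)).
Qed.

Theorem corollary4p6 (R : realType) (n : nat)
    (c : 'I_n -> 'I_n -> 'I_n -> R[i]) :
  is_lie_structure c ->
  germ_eq0 (R := R) (in_F c) (in_F1 c).
Proof.
move=> _; have [e e0 small] := small_in_F_in_F1 c.
by exists e => // A hA; split; [apply: small | apply: in_F1_in_F].
Qed.
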